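(* Let $p$ be an odd prime, $a_1,a_2,a_3\in\mathbb{F}_p$, $s=3+a_1+a_2+a_3$, and fix an index $i$ (indices modulo $3$). Let $x\neq(0,0,0)$ be a solution in $\mathbb{F}_p^3$ of \[ x_1^2+x_2^2+x_3^2+a_1x_2x_3+a_2x_1x_3+a_3x_1x_2 = s\,x_1x_2x_3 \] with $x_i=0$. Let $m_k$ ($k=1,2,3$) replace $x_k$ by $-x_k + s x_{k-1}x_{k+1} - a_{k+1}x_{k-1} - a_{k-1}x_{k+1}$ leaving the other coordinates unchanged, let $\rho = m_{i+1}\circ m_{i-1}$, and let $N$ be the order of $\rho$ as a permutation of the nonzero solutions with $i$-th coordinate $0$. For such solutions $y$ (which have $y_{i-1}y_{i+1}\neq 0$) define \[ \Delta_i(y) = \frac12\Big(\frac{a_{i-1}}{y_{i-1}} + \frac{a_{i+1}}{y_{i+1}}\Big). \] If $a_i^2\neq 4$, then \[ \sum_{\ell=0}^{N-1}\Big(\Delta_i(m_{i-1}\rho^\ell x) + \Delta_i(\rho^\ell x)\Big) = 0. \] If $a_i^2 = 4$, then this identity holds if and only if $2a_{i-1} = a_{i+1}a_i$. *)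

From mathcomp Require Import all_boot all_algebra.
Set Implicit Arguments. Unset Strict Implicit. Unset Printing Implicit Defensive.
Import GRing.Theory.
Local Open Scope ring_scope.

(* Indices are 0-based ('I_3) and taken modulo 3:
   the paper's index k corresponds to k-1 here. *)
Definition nxt (k : 'I_3) : 'I_3 := inord ((k + 1) %% 3).
Definition prv (k : 'I_3) : 'I_3 := inord ((k + 2) %% 3).

Section Markoff.
Variables (p : nat) (a : 'I_3 -> 'F_p).

Definition sval3 : 'F_p := 3%:R + a ord0 + a (inord 1) + a (inord 2).

Definition is_sol (x : {ffun 'I_3 -> 'F_p}) : bool :=
  \sum_(k < 3) x k ^+ 2 + \sum_(k < 3) a k * x (prv k) * x (nxt k)
  == sval3 * x ord0 * x (inord 1) * x (inord 2).

Definition solset (i : 'I_3) : {set {ffun 'I_3 -> 'F_p}} :=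
  [set y | is_sol y & (y != 0) && (y i == 0)].

Definition mv (k : 'I_3) (y : {ffun 'I_3 -> 'F_p}) : {ffun 'I_3 -> 'F_p} :=
  [ffun j => if j == k then
      - y k + sval3 * y (prv k) * y (nxt k) - a (nxt k) * y (prv k)
      - a (prv k) * y (nxt k)
    else y j].

Definition rho (i : 'I_3) (y : {ffun 'I_3 -> 'F_p}) := mv (nxt i) (mv (prv i) y).

Definition is_rho_order (i : 'I_3) (N : nat) : Prop :=
  (0 < N)%N /\
  (forall y, y \in solset i -> iter N (rho i) y = y) /\
  (forall n, (0 < n < N)%N -> exists2 y, y \in solset i & iter n (rho i) y != y).

Definition Delta (i : 'I_3) (y : {ffun 'I_3 -> 'F_p}) : 'F_p :=
  (a (prv i) / y (prv i) + a (nxt i) / y (nxt i)) / 2%:R.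

Definition DeltaSum (i : 'I_3) (N : nat) (x : {ffun 'I_3 -> 'F_p}) : 'F_p :=
  \sum_(l < N) (Delta i (mv (prv i) (iter l (rho i) x)) + Delta i (iter l (rho i) x)).

End Markoff.

(* On the line x_i = 0 the surface equation becomes the binary quadratic
   u^2 + a_i u v + v^2 = 0 in (u, v) = (x_{i-1}, x_{i+1}).  There both Vieta
   involutions are linear, and by Vieta's product formula rho multiplies every
   point by w = (v/u)^2.  As Delta is homogeneous of degree -1, the l-th
   summand is w^-l times the summand for l = 0, which is
   (2 a_{i+1} - a_i a_{i-1}) / (2 v); so the sum is a geometric sum of ratio
   1/w with (1/w)^N = 1.  It vanishes when w <> 1, which happens exactly when
   a_i^2 <> 4.  When a_i^2 = 4, w = 1, so rho is the identity, N = 1 and the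
   sum is that single summand. *)

From mathcomp Require Import all_boot all_algebra.
From mathcomp Require Import ring.

Set Implicit Arguments.
Unset Strict Implicit.
Unset Printing Implicit Defensive.

Import GRing.Theory.
Local Open Scope ring_scope.

Lemma nxt_prv (i : 'I_3) : nxt (prv i) = i.
Proof. by case: i => [[|[|[|]]] ?] //; apply/val_inj; rewrite /prv /nxt /= ?inordK. Qed.

Lemma prv_nxt (i : 'I_3) : prv (nxt i) = i.
Proof. by case: i => [[|[|[|]]] ?] //; apply/val_inj; rewrite /prv /nxt /= ?inordK. Qed.

Lemma prv_prv (i : 'I_3) : prv (prv i) = nxt i.
Proof. by case: i => [[|[|[|]]] ?] //; apply/val_inj; rewrite /prv /nxt /= ?inordK. Qed.

Lemma nxt_nxt (i : 'I_3) : nxt (nxt i) = prv i.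
Proof. by case: i => [[|[|[|]]] ?] //; apply/val_inj; rewrite /prv /nxt /= ?inordK. Qed.

Lemma prv_neq (i : 'I_3) : prv i != i.
Proof. by case: i => [[|[|[|]]] ?] //; rewrite -val_eqE /prv /= ?inordK. Qed.

Lemma nxt_neq (i : 'I_3) : nxt i != i.
Proof. by case: i => [[|[|[|]]] ?] //; rewrite -val_eqE /nxt /= ?inordK. Qed.

Lemma prv_neq_nxt (i : 'I_3) : prv i != nxt i.
Proof. by case: i => [[|[|[|]]] ?] //; rewrite -val_eqE /prv /nxt /= ?inordK. Qed.

Lemma nxt_neq_prv (i : 'I_3) : nxt i != prv i.
Proof. by rewrite eq_sym prv_neq_nxt. Qed.

Lemma ord3_cases (i j : 'I_3) : [\/ j = i, j = prv i | j = nxt i].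
Proof.
have: [|| j == i, j == prv i | j == nxt i].
  by case: i => [[|[|[|]]] ?] //; case: j => [[|[|[|]]] ?] //;
    rewrite -!val_eqE /prv /nxt /= ?inordK.
by case/or3P => /eqP; [apply: Or31 | apply: Or32 | apply: Or33].
Qed.

Lemma big_ord3_rot (R : Type) (idx : R) (op : Monoid.com_law idx)
    (F : 'I_3 -> R) (i : 'I_3) :
  \big[op/idx]_(k < 3) F k = op (op (F i) (F (prv i))) (F (nxt i)).
Proof.
rewrite (bigD1 i) // (bigD1 (prv i)) ?prv_neq //=.
rewrite (big_pred1 (nxt i)) ?Monoid.mulmA // => j /=.
case: (ord3_cases i j) => [->|->|->]; rewrite !eqxx ?andbF //=.
- by rewrite eq_sym (negbTE (nxt_neq i)).
- by rewrite (negbTE (prv_neq_nxt i)).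
- by rewrite nxt_neq eq_sym prv_neq_nxt.
Qed.

Lemma prod_ord3 (R : comPzRingType) (f : 'I_3 -> R) :
  \prod_(k < 3) f k = f ord0 * f (inord 1) * f (inord 2).
Proof.
rewrite !big_ord_recr big_ord0 /= mul1r.
by congr (f _ * f _ * f _); apply/val_inj; rewrite /= ?inordK.
Qed.

Lemma Fp_two_neq0 (p : nat) : prime p -> odd p -> (2%:R : 'F_p) != 0.
Proof.
move=> p_pr p_odd; rewrite -(dvdn_pcharf (pchar_Fp p_pr)).
have p_neq1 : p != 1%N by rewrite neq_ltn prime_gt1 ?orbT.
by apply: contraL p_odd => /(prime_nt_dvdP (isT : prime 2) p_neq1) ->.
Qed.

Lemma sum_expr_root1_eq0 (R : idomainType) (z : R) (n : nat) :
  z ^+ n = 1 -> z != 1 -> \sum_(l < n) z ^+ l = 0.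
Proof.
move=> zn1 z_neq1; apply/eqP; move: (subrX1 z n); rewrite zn1 subrr => /esym/eqP.
by rewrite mulf_eq0 subr_eq0 (negbTE z_neq1).
Qed.

Section Conic.
Variables (F : fieldType) (A : F).

Lemma conic_ratio (u v : F) : u != 0 ->
  u ^+ 2 + A * u * v + v ^+ 2 = 0 -> (v / u) ^+ 2 + A * (v / u) + 1 = 0.
Proof.
by move=> u0 E; apply: (mulIf (expf_neq0 2 u0)); rewrite mul0r -E; field.
Qed.

Lemma conic_vieta (u v : F) : u != 0 ->
  u ^+ 2 + A * u * v + v ^+ 2 = 0 -> - u - A * v = (v / u) ^+ 2 * u.
Proof.
move=> u0 E; apply: (mulIf u0); transitivity (v ^+ 2); last by field.
by rewrite -[RHS]subr0 -E; ring.
Qed.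

Lemma conic_root_sqr (t : F) : t ^+ 2 + A * t + 1 = 0 -> - 1 - A * t = t ^+ 2.
Proof. by move=> r; apply/subr0_eq; rewrite -[RHS]oppr0 -r; ring. Qed.

Lemma conic_root_sqr_eq1 (t : F) : 2%:R != 0 :> F ->
  t ^+ 2 + A * t + 1 = 0 -> (t ^+ 2 == 1) = (A ^+ 2 == 4%:R).
Proof.
move=> two r; have At : A * t = - 1 - t ^+ 2 by rewrite -(conic_root_sqr r); ring.
apply/eqP/eqP => [t2 | A2].
  rewrite t2 in At; have /orP[] : (t == 1) || (t == -1) by rewrite -sqrf_eq1 t2.
    by move=> /eqP tE; rewrite tE mulr1 in At; rewrite At; ring.
  by move=> /eqP tE; rewrite tE mulrN1 in At; rewrite -[A]opprK At; ring.
have sq : (t + A / 2%:R) ^+ 2 = 0.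
  have -> : (t + A / 2%:R) ^+ 2 = (t ^+ 2 + A * t + 1) + (A ^+ 2 - 4%:R) / 4%:R.
    by field; rewrite (_ : 4%:R = 2%:R * 2%:R :> F) ?mulf_neq0 // -natrM.
  by rewrite r A2 subrr mul0r addr0.
move/eqP: sq; rewrite sqrf_eq0 addr_eq0 => /eqP ->.
by rewrite sqrrN expr_div_n A2 -natrX divff // (natrX _ 2 2) expf_neq0.
Qed.

Lemma double_eq_mul_swap (b c : F) : 2%:R != 0 :> F -> A ^+ 2 = 4%:R ->
  (2%:R * b == A * c) = (2%:R * c == b * A).
Proof.
move=> two A2.
suff half (x y : F) : 2%:R * x = A * y -> 2%:R * y = x * A.
  apply/eqP/eqP => h; first exact: half.
  by rewrite [A * c]mulrC; apply: half; rewrite h mulrC.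
move=> h; apply: (mulfI two).
transitivity (A ^+ 2 * y); first by rewrite A2 mulrA -natrM.
by rewrite mulrA h; ring.
Qed.

End Conic.

Section Markoff.
Variables (p : nat) (a : 'I_3 -> 'F_p).
Implicit Types (y : {ffun 'I_3 -> 'F_p}) (c : 'F_p).

(* Pointwise scaling: ['F_p] is not canonically an lmodType over itself, so
   [*:] is not available on these vectors. *)
Definition dilate c y : {ffun 'I_3 -> 'F_p} := [ffun j => c * y j].

Lemma dilate1 y : dilate 1 y = y.
Proof. by apply/ffunP => j; rewrite ffunE mul1r. Qed.

Lemma mv_ne k y j : j != k -> mv a k y j = y j.
Proof. by rewrite ffunE => /negbTE->. Qed.

Lemma mv_scale k c y :
  y (prv k) * y (nxt k) = 0 -> mv a k (dilate c y) = dilate c (mv a k y).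
Proof.
move=> yky; apply/ffunP => j; rewrite !ffunE; case: eqP => // _.
have -> : sval3 a * (c * y (prv k)) * (c * y (nxt k))
          = sval3 a * c ^+ 2 * (y (prv k) * y (nxt k)) by ring.
rewrite -(mulrA _ (y (prv k))) yky !mulr0; ring.
Qed.

Lemma Delta_scale i c y : Delta a i (dilate c y) = c^-1 * Delta a i y.
Proof. by rewrite /Delta !ffunE !invfM; ring. Qed.

Section Axis.
Variable i : 'I_3.
Local Notation P := (prv i).
Local Notation Q := (nxt i).
Local Notation A := (a i).

Lemma is_sol_axis y :
  y i = 0 -> is_sol a y = (y P ^+ 2 + A * y P * y Q + y Q ^+ 2 == 0).
Proof.
move=> yi; rewrite /is_sol !(big_ord3_rot _ _ i) /= nxt_prv prv_nxt prv_prv nxt_nxt yi.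
have -> : sval3 a * y ord0 * y (inord 1) * y (inord 2) = sval3 a * \prod_(k < 3) y k.
  by rewrite prod_ord3 !mulrA.
rewrite (big_ord3_rot _ _ i) /= yi !mul0r !mulr0.
by congr (_ == 0); ring.
Qed.

Lemma solset_axis y : y \in solset a i ->
  [/\ y i = 0, y P != 0, y Q != 0 & y P ^+ 2 + A * y P * y Q + y Q ^+ 2 = 0].
Proof.
rewrite inE => /and3P[+ y_neq0 /eqP yi]; rewrite is_sol_axis // => /eqP E.
have y0 : y P = 0 -> y Q = 0 -> y = 0.
  by move=> yP yQ; apply/ffunP => j; rewrite ffunE; case: (ord3_cases i j) => ->.
split=> //; apply: contra y_neq0 => /eqP y0'; apply/eqP/y0 => //; apply/eqP.
  by rewrite -(sqrf_eq0 (y Q)) -E y0'; apply/eqP; ring.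
by rewrite -(sqrf_eq0 (y P)) -E y0'; apply/eqP; ring.
Qed.

Lemma rho_scale c y : y i = 0 -> rho a i (dilate c y) = dilate c (rho a i y).
Proof.
move=> yi; rewrite /rho !mv_scale //.
  by rewrite prv_nxt mv_ne 1?eq_sym ?prv_neq // yi mul0r.
by rewrite nxt_prv yi mulr0.
Qed.

Lemma mv_prv_axis y : y i = 0 ->
  mv a P y = [ffun j => if j == P then - y P - A * y Q else y j].
Proof.
move=> yi; apply/ffunP => j; rewrite !ffunE; case: eqP => // _.
by rewrite prv_prv nxt_prv yi; ring.
Qed.

Lemma mv_nxt_axis y : y i = 0 ->
  mv a Q y = [ffun j => if j == Q then - y Q - A * y P else y j].
Proof.
move=> yi; apply/ffunP => j; rewrite !ffunE; case: eqP => // _.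
by rewrite nxt_nxt prv_nxt yi; ring.
Qed.

Lemma rho_solset y : y \in solset a i -> rho a i y = dilate ((y Q / y P) ^+ 2) y.
Proof.
case/solset_axis => yi yP _ E; have r := conic_ratio yP E.
set t : 'F_p := y Q / y P in r *; have yQt : y Q = t * y P by rewrite divfK.
have mP : - y P - A * y Q = t ^+ 2 * y P by exact: conic_vieta.
have mQ : - y Q - A * (t ^+ 2 * y P) = t ^+ 2 * y Q.
  apply/subr0_eq; transitivity (- t * y P * (t ^+ 2 + A * t + 1)).
    by rewrite yQt; ring.
  by rewrite r mulr0.
have iP := prv_neq i; have iQ := nxt_neq i.
rewrite /rho mv_prv_axis // mv_nxt_axis; last by rewrite ffunE eq_sym (negbTE iP).
apply/ffunP => j; rewrite !ffunE (negbTE (nxt_neq_prv i)) mP.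
case: (ord3_cases i j) => ->.
- by rewrite eq_sym (negbTE iQ) eq_sym (negbTE iP) yi mulr0.
- by rewrite (negbTE (prv_neq_nxt i)) eqxx.
- by rewrite !eqxx mQ.
Qed.

Lemma iter_rho_solset y l : y \in solset a i ->
  iter l (rho a i) y = dilate (((y Q / y P) ^+ 2) ^+ l) y.
Proof.
move=> ys; have [yi _ _ _] := solset_axis ys; set w := (y Q / y P) ^+ 2.
elim: l => [|l IHl]; first by rewrite dilate1.
rewrite iterS IHl rho_scale // rho_solset //; apply/ffunP => j.
by rewrite !ffunE mulrA -exprSr.
Qed.

Lemma Delta_mv_prv_add y : 2%:R != 0 :> 'F_p -> y \in solset a i ->
  Delta a i (mv a P y) + Delta a i y = (2%:R * a Q - A * a P) / (2%:R * y Q).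
Proof.
move=> two /solset_axis[yi yP yQ E].
have uv : y P ^+ 2 + y Q ^+ 2 = - (A * y P * y Q) by rewrite -[RHS]add0r -E; ring.
rewrite /Delta mv_prv_axis // !ffunE eqxx (negbTE (nxt_neq_prv i)) conic_vieta //.
transitivity ((a P * (y P ^+ 2 + y Q ^+ 2) / (y P * y Q ^+ 2) + 2%:R * a Q / y Q) / 2%:R).
  by field; rewrite yP yQ two.
by rewrite uv; field; rewrite yP yQ two.
Qed.

Lemma DeltaSum_solset N y : 2%:R != 0 :> 'F_p -> y \in solset a i ->
  DeltaSum a i N y =
  (\sum_(l < N) ((y P / y Q) ^+ 2) ^+ l) * ((2%:R * a Q - A * a P) / (2%:R * y Q)).
Proof.
move=> two ys; have [yi _ _ _] := solset_axis ys.
rewrite /DeltaSum big_distrl; apply: eq_bigr => l _.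
rewrite iter_rho_solset // mv_scale ?nxt_prv ?yi ?mulr0 // !Delta_scale -mulrDr.
by rewrite Delta_mv_prv_add // -!exprVn invf_div.
Qed.

Lemma rho_period_ratio N y : y \in solset a i ->
  iter N (rho a i) y = y -> ((y P / y Q) ^+ 2) ^+ N = 1.
Proof.
move=> ys; have [_ yP _ _] := solset_axis ys.
rewrite iter_rho_solset // => /ffunP/(_ P); rewrite ffunE -[RHS]mul1r => /(mulIf yP) wN.
by rewrite -invf_div !exprVn wN invr1.
Qed.

Lemma solset_ratio_sqr_neq1 y : 2%:R != 0 :> 'F_p -> A ^+ 2 != 4%:R ->
  y \in solset a i -> (y P / y Q) ^+ 2 != 1.
Proof.
move=> two A2 /solset_axis[_ _ yQ E].
have E' : y Q ^+ 2 + A * y Q * y P + y P ^+ 2 = 0 by rewrite -E; ring.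
by rewrite (conic_root_sqr_eq1 two (conic_ratio yQ E')).
Qed.

Lemma rho_solset_id : 2%:R != 0 :> 'F_p -> A ^+ 2 = 4%:R ->
  {in solset a i, forall y, rho a i y = y}.
Proof.
move=> two A2 y ys; have [_ yP _ E] := solset_axis ys.
have /eqP w1 : (y Q / y P) ^+ 2 == 1.
  by rewrite (conic_root_sqr_eq1 two (conic_ratio yP E)) A2.
by rewrite rho_solset // w1 dilate1.
Qed.

Lemma rho_order_id N : {in solset a i, forall y, rho a i y = y} ->
  is_rho_order a i N -> N = 1%N.
Proof.
move=> rho_id [N_gt0 [_ Nmin]]; case: N N_gt0 Nmin => [|[|n]] // _ /(_ 1%N isT)[y ys].
by rewrite /= rho_id // eqxx.
Qed.

End Axis.
End Markoff.

Theorem proposition2p3 (p : nat) (a : 'I_3 -> 'F_p) (i : 'I_3)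
    (x : {ffun 'I_3 -> 'F_p}) (N : nat) :
  prime p -> odd p ->
  x \in solset a i ->
  is_rho_order a i N ->
  (a i ^+ 2 != 4%:R -> DeltaSum a i N x = 0) /\
  (a i ^+ 2 = 4%:R ->
     (DeltaSum a i N x = 0 <-> 2%:R * a (prv i) = a (nxt i) * a i)).
Proof.
move=> p_pr p_odd xs Nord; have two := Fp_two_neq0 p_pr p_odd.
have [_ _ xQ _] := solset_axis xs; have [_ [Nper _]] := Nord.
rewrite DeltaSum_solset //; split => A2.
  rewrite sum_expr_root1_eq0 ?mul0r //; first exact: rho_period_ratio (Nper x xs).
  exact: (solset_ratio_sqr_neq1 two A2 xs).
rewrite (rho_order_id (rho_solset_id two A2) Nord) big_ord1 expr0 mul1r.
rewrite (rwP eqP) mulf_eq0 invr_eq0 mulf_eq0 (negbTE two) (negbTE xQ) !orbF.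
rewrite subr_eq0 double_eq_mul_swap //.
by split=> /eqP.
Qed.
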